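(* Let $T$ be a finite tree with positive weights $x_v$ (vertices) and $w_e$ (edges), let $c_0,c_l$ be vertices at distance $l\geq1$ with simple path $c_0,c_1,\dots,c_l$, and root $T$ at $c_0$. Then $$Z_{T_{c_1}-T_{c_l}}\,Z_T\;\geq\;Z_{T_{c_1}}\,Z_{T-T_{c_l}}\ \text{ if $l$ is odd},\qquad Z_{T_{c_1}-T_{c_l}}\,Z_T\;\leq\;Z_{T_{c_1}}\,Z_{T-T_{c_l}}\ \text{ if $l$ is even}.$$ (For $l=0$ the paper's statement, with left-hand side multiplied by $\mathbb 1_{l\geq1}$, reduces to the trivial inequality $0\le$ right-hand side.)
   Context: General monomer-dimer model on a finite graph $G=(V,E)$: $Z_G=\sum_{D}\prod_{e\in D}w_e\prod_{v\in\mathscr M_G(D)}x_v$, the sum over all matchings $D\subseteq E$, where $\mathscr M_G(D)$ is the set of vertices not covered by $D$; the partition function of the empty graph is $1$. In the tree $T$ rooted at $c_0$, $T_v$ denotes the subtree induced by $v$ and all its descendants; for subtrees $A\supseteq B$, $A-B$ denotes the subgraph induced by the vertices of $A$ not in $B$. *)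

From mathcomp Require Import all_boot all_order all_algebra.
Set Implicit Arguments. Unset Strict Implicit. Unset Printing Implicit Defensive.
Import Order.TTheory GRing.Theory Num.Theory.
Local Open Scope ring_scope.

Definition simple_graph (V : finType) (e : rel V) : Prop :=
  symmetric e /\ irreflexive e.

Definition is_tree (V : finType) (e : rel V) : Prop :=
  [/\ simple_graph e,
      (forall x y : V, connect e x y) &
      (forall (x : V) (p : seq V), path e x p -> uniq (x :: p) ->
          (2 <= size p)%N -> ~~ e (last x p) x)].

Definition is_edge (V : finType) (e : rel V) (f : {set V}) : bool :=
  [exists a, exists b, e a b && (f == [set a; b])].

Definition matching_in (V : finType) (e : rel V) (S : {set V})
    (D : {set {set V}}) : bool :=
  [forall f in D, is_edge e f && (f \subset S)] &&
  [forall f in D, forall g in D, (f != g) ==> [disjoint f & g]].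

Definition covered (V : finType) (D : {set {set V}}) : {set V} :=
  \bigcup_(f in D) f.

(* Monomer-dimer partition function of the subgraph induced by S,
   with vertex weights x and edge weights w. Z of the empty graph is 1. *)
Definition Zmd (R : comRingType) (V : finType) (e : rel V)
    (x : V -> R) (w : {set V} -> R) (S : {set V}) : R :=
  \sum_(D : {set {set V}} | matching_in e S D)
     ((\prod_(f in D) w f) * \prod_(v in S :\: covered D) x v).

(* u is in T_v (tree rooted at r): v lies on the simple path from r to u.
   Simple paths have at most #|V| - 1 steps, hence the bounded quantifier. *)
Definition subtree (V : finType) (e : rel V) (r v : V) : {set V} :=
  [set u | [exists n : 'I_#|V|, exists t : n.-tuple V,
     [&& path e r t, uniq (r :: t), last r t == u & v \in r :: t]]].

(* Root the tree at c_0 and let U_0 = V, U_k = T_{c_k} for 0 < k <= l, U_{l+1} = empty.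
   The only edge between the slices U_i \ U_{j+1} and U_{j+1} \ U_{j+2} is c_j c_{j+1}, so the
   pair (Z(U_i \ U_{j+2}), Z(U_i \ U_{j+2} - c_{j+1})) is obtained from
   (Z(U_i \ U_{j+1}), Z(U_i \ U_{j+1} - c_j)) by a linear map (s, t) |-> (A s + B t, C s)
   with A, B, C >= 0 depending only on the new slice.  Running this recursion for i = 0 and
   i = 1 (the latter started from (1, 0)), the 2x2 determinant of the two pairs is multiplied
   by -BC <= 0 at each step, so its sign alternates; the inequality is the sign of that
   determinant at step l - 1. *)

From mathcomp Require Import all_boot all_order all_algebra.
From mathcomp Require Import ring.

Set Implicit Arguments. Unset Strict Implicit. Unset Printing Implicit Defensive.
Import Order.TTheory GRing.Theory Num.Theory.
Local Open Scope ring_scope.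

Section Tree.
Variables (V : finType) (e : rel V).
Hypothesis tree : is_tree e.

Let e_sym : symmetric e. Proof. by case: tree => -[]. Qed.
Let e_irr : irreflexive e. Proof. by case: tree => -[]. Qed.

Lemma subtreeP r v u : reflect
  (exists t, [/\ path e r t, uniq (r :: t), last r t = u & v \in r :: t])
  (u \in subtree e r v).
Proof.
rewrite inE; apply: (iffP existsP) => [[n /existsP [t /and4P [pt ut /eqP <- vt]]]|].
  by exists t.
case=> t [pt ut <- vt]; have t_lt : (size t < #|V|)%N.
  by have := max_card (mem (r :: t)); rewrite (card_uniqP ut).
by exists (Ordinal t_lt); apply/existsP; exists (in_tuple t); rewrite pt ut eqxx vt.
Qed.

(* The only use of acyclicity. *)
Lemma path_adjacent_last r t u y : path e r (rcons t u) -> uniq (r :: rcons t u) ->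
  y \in r :: t -> e u y -> y = last r t.
Proof.
case: tree => _ _ acyclic.
have adj_first s z : path e z (rcons s u) -> uniq (z :: rcons s u) -> e u z -> s = [::].
  case: s => [//|a s] ps us euz.
  by move: (acyclic _ _ ps us); rewrite size_rcons last_rcons euz => /(_ isT).
move=> pt ut; rewrite inE => /orP [/eqP ->|yt] euy; first by rewrite (adj_first t r).
move: pt ut; case/splitPr: yt => t1 t2.
rewrite rcons_cat cat_path /= => /andP [_ /andP [_ p2]].
move=> /andP [_]; rewrite cat_uniq => /and3P [_ _ u2].
by rewrite last_cat /= (adj_first t2 y).
Qed.

Lemma simple_path_sub_walk r t : path e r t -> forall s, path e r s -> uniq (r :: s) ->
  last r s = last r t -> {subset r :: s <= r :: t}.
Proof.
elim/last_ind: t => [|t y IH] pt s ps us.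
  case: s ps us => [|z s] _ /andP [rs _] /= ls; first by move=> v.
  by move: (mem_last z s); rewrite ls (negbTE rs).
move: pt; rewrite rcons_path last_rcons => /andP [pt ezy].
have sub_rcons : {subset r :: t <= r :: rcons t y}.
  by move=> v; rewrite -!cats1 -cat_cons mem_cat => ->.
case/lastP: s ps us => [_ _ /= <- v|s y']; first by rewrite mem_seq1 => /eqP ->; rewrite mem_head.
rewrite last_rcons => ps us y'y; subst y'; set z := last r t in ezy IH.
have [zs|zNs] := boolP (z \in r :: rcons s y).
  have zy : z != y by apply: contraTneq ezy => ->; rewrite e_irr.
  have {}zs : z \in r :: s by move: zs; rewrite -rcons_cons mem_rcons inE (negbTE zy).
  have lz : z = last r s by apply: (path_adjacent_last ps us zs); rewrite e_sym.
  move: ps us; rewrite rcons_path -rcons_cons rcons_uniq => /andP [ps _] /andP [_ us].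
  move=> v; rewrite mem_rcons inE => /orP [/eqP ->|vs].
    by rewrite -rcons_cons mem_rcons mem_head.
  exact/sub_rcons/(IH pt _ ps us (esym lz)).
have ps' : path e r (rcons (rcons s y) z) by rewrite rcons_path ps last_rcons e_sym.
have us' : uniq (r :: rcons (rcons s y) z) by rewrite -rcons_cons rcons_uniq zNs us.
move=> v vs; apply/sub_rcons/(IH pt _ ps' us' (last_rcons _ _ _)).
by rewrite -rcons_cons mem_rcons inE vs orbT.
Qed.

Lemma mem_subtree r v u t : path e r t -> uniq (r :: t) -> last r t = u ->
  (u \in subtree e r v) = (v \in r :: t).
Proof.
move=> pt ut lt; apply/subtreeP/idP => [[s [ps us ls vs]]|vt]; last by exists t.
by apply: simple_path_sub_walk pt _ ps us _ _ vs; rewrite ls.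
Qed.

Lemma subtree_root r : subtree e r r = setT.
Proof.
apply/setP => u; rewrite in_setT; case: tree => _ /(_ r u) /connectP [t pt ->] _.
by case: (shortenP pt) => s ps us _; rewrite (mem_subtree r ps us) ?mem_head.
Qed.

Lemma subtree_sub r v v' : v' \in subtree e r v -> subtree e r v' \subset subtree e r v.
Proof.
move=> v'v; apply/subsetP => u /subtreeP [t [pt ut <- v't]].
rewrite (mem_subtree _ pt ut) //; move: v't; rewrite inE => /orP [/eqP v'r|v't].
  move: v'v; rewrite v'r (@mem_subtree r v r [::]) // mem_seq1 => /eqP ->.
  exact: mem_head.
case/splitPr: v't pt ut => t1 t2 pt ut.
have pt1 : path e r (rcons t1 v') by move: pt; rewrite cat_path rcons_path => /and3P [-> ->].
have ut1 : uniq (r :: rcons t1 v') by move: ut; rewrite -cat_cons -cat_rcons cat_uniq => /andP [].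
rewrite (mem_subtree _ pt1 ut1 (last_rcons _ _ _)) in v'v.
by rewrite -cat_cons -cat_rcons mem_cat v'v.
Qed.

Lemma subtree_boundary r v t u y : path e r (rcons t v) -> uniq (r :: rcons t v) ->
  u \in subtree e r v -> y \notin subtree e r v -> e u y -> u = v /\ y = last r t.
Proof.
move=> pv uv /subtreeP [s [ps us <- vs]] yN euy.
have ys : y \in r :: s.
  apply: contraNT yN => yNs; apply/subtreeP; exists (rcons s y); split.
  - by rewrite rcons_path ps.
  - by rewrite -rcons_cons rcons_uniq yNs us.
  - exact: last_rcons.
  - by rewrite -rcons_cons mem_rcons inE vs orbT.
case/lastP: s => [|s u'] in ps us vs ys euy *.
  by move: ys euy; rewrite mem_seq1 => /eqP ->; rewrite e_irr.
rewrite last_rcons in euy *.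
have {}ys : y \in r :: s.
  by move: ys; rewrite -rcons_cons mem_rcons inE; case: eqP euy => // ->; rewrite e_irr.
have ly := path_adjacent_last ps us ys euy.
have vu : v = u'.
  move: (ps) (us); rewrite rcons_path -rcons_cons rcons_uniq => /andP [ps' _] /andP [_ us'].
  move: vs; rewrite -rcons_cons mem_rcons inE => /orP [/eqP //|vs].
  by move: yN; rewrite (mem_subtree _ ps' us' (esym ly)) vs.
subst u'; split=> //.
have /(simple_path_sub_walk pv ps us) : y \in r :: rcons s v.
  by rewrite -rcons_cons mem_rcons inE ys orbT.
rewrite !last_rcons -rcons_cons mem_rcons inE => /(_ erefl) /orP [/eqP yv|yt].
  by rewrite yv e_irr in euy.
exact: path_adjacent_last pv uv yt euy.
Qed.

Variables (c0 : V) (p : seq V).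
Hypotheses (p_path : path e c0 p) (p_uniq : uniq (c0 :: p)).

Local Notation c k := (nth c0 (c0 :: p) k).

Lemma take_path k : path e c0 (take k p).
Proof. by move: p_path; rewrite -{1}(cat_take_drop k p) cat_path => /andP []. Qed.

Lemma take_uniq_cons k : uniq (c0 :: take k p).
Proof. by have /= := take_uniq k.+1 p_uniq. Qed.

Lemma last_take_nth k : (k <= size p)%N -> last c0 (take k p) = c k.
Proof. by case: k => [|k] kp; rewrite ?take0 // (take_nth c0 kp) last_rcons. Qed.

Lemma mem_subtree_nth k v : (k <= size p)%N ->
  (c k \in subtree e c0 v) = (v \in c0 :: take k p).
Proof.
by move=> kp; rewrite (mem_subtree v (take_path k) (take_uniq_cons k) (last_take_nth kp)).
Qed.

Definition path_subtree k := if (k <= size p)%N then subtree e c0 (c k) else set0.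

Lemma path_subtreeE k : (k <= size p)%N -> path_subtree k = subtree e c0 (c k).
Proof. by rewrite /path_subtree => ->. Qed.

Lemma path_subtree_out k : (size p < k)%N -> path_subtree k = set0.
Proof. by move=> pk; rewrite /path_subtree leqNgt pk. Qed.

Lemma nth_in_path_subtree k : (k <= size p)%N -> c k \in path_subtree k.
Proof.
move=> kp; rewrite path_subtreeE // (mem_subtree_nth _ kp).
by rewrite -{1}(last_take_nth kp) mem_last.
Qed.

Lemma nth_notin_path_subtree k : (k <= size p)%N -> c k \notin path_subtree k.+1.
Proof.
rewrite leq_eqVlt => /predU1P [->|kp]; first by rewrite path_subtree_out ?inE.
rewrite path_subtreeE // (mem_subtree_nth _ (ltnW kp)).
have : uniq ((c0 :: take k p) ++ nth c0 p k :: drop k.+1 p).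
  by rewrite cat_cons -(drop_nth c0 kp) cat_take_drop.
by rewrite cat_uniq => /and3P [_ /hasPn /(_ _ (mem_head _ _))].
Qed.

Lemma path_subtree_decr k : path_subtree k.+1 \subset path_subtree k.
Proof.
case: (ltnP k (size p)) => kp; last by rewrite path_subtree_out ?sub0set.
rewrite !path_subtreeE ?(ltnW kp) //; apply: subtree_sub.
rewrite (mem_subtree_nth _ kp) (take_nth c0 kp) -rcons_cons mem_rcons inE.
by rewrite -{2}(last_take_nth (ltnW kp)) mem_last orbT.
Qed.

Lemma path_subtree_boundary k u y : (0 < k <= size p)%N ->
  u \in path_subtree k -> y \notin path_subtree k -> e u y -> u = c k /\ y = c k.-1.
Proof.
case: k => [//|k] /= kp; rewrite path_subtreeE // -(last_take_nth (ltnW kp)).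
have := take_uniq_cons k.+1; have := take_path k.+1; rewrite (take_nth c0 kp).
exact: subtree_boundary.
Qed.
End Tree.

Lemma big_setU_disjoint (R : Type) (idx : R) (op : Monoid.com_law idx) (I : finType)
    (A B : {set I}) (F : I -> R) : [disjoint A & B] ->
  \big[op/idx]_(i in A :|: B) F i = op (\big[op/idx]_(i in A) F i) (\big[op/idx]_(i in B) F i).
Proof. by move=> dAB; rewrite -bigU //; apply: eq_bigl => i; rewrite inE. Qed.

Section Matchings.
Variables (V : finType) (e : rel V).
Implicit Types (S X Y f g : {set V}) (D : {set {set V}}).

Lemma is_edgeP f : reflect (exists a b, e a b /\ f = [set a; b]) (is_edge e f).
Proof.
apply: (iffP existsP) => [[a /existsP [b /andP [eab /eqP ->]]]|[a [b [eab ->]]]].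
  by exists a, b.
by exists a; apply/existsP; exists b; rewrite eab eqxx.
Qed.

Lemma edge_neq0 f : is_edge e f -> f != set0.
Proof. by case/is_edgeP => a [b [_ ->]]; apply/set0Pn; exists a; rewrite !inE eqxx. Qed.

Lemma matchingP S D : reflect
  ((forall f, f \in D -> is_edge e f /\ f \subset S) /\
   (forall f g, f \in D -> g \in D -> f != g -> [disjoint f & g]))
  (matching_in e S D).
Proof.
apply: (iffP andP) => [[/forall_inP DS /forall_inP Ddisj]|[DS Ddisj]]; split.
- by move=> f /DS /andP.
- by move=> f g /Ddisj /forall_inP fdisj /fdisj /implyP.
- by apply/forall_inP => f /DS [-> ->].
- by apply/forall_inP => f fD; apply/forall_inP => g gD; apply/implyP; apply: Ddisj.
Qed.

Lemma matching_edge_sub S D f : matching_in e S D -> f \in D -> f \subset S.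
Proof. by case/matchingP => DS _ /DS []. Qed.

Lemma covered_sub S D : matching_in e S D -> covered D \subset S.
Proof. by move=> DS; apply/bigcupsP => f; apply: matching_edge_sub. Qed.

Lemma matching_in_restrict S X D :
  matching_in e S D -> matching_in e X [set f in D | f \subset X].
Proof.
case/matchingP => DS Ddisj; apply/matchingP; split => [f|f g].
  by rewrite inE => /andP [/DS [ef _] fX].
by rewrite !inE => /andP [fD _] /andP [gD _]; apply: Ddisj.
Qed.

Lemma edge_sub_disjoint X Y f :
  [disjoint X & Y] -> is_edge e f -> f \subset X -> (f \subset Y) = false.
Proof.
move=> dXY /edge_neq0 /set0Pn [a af] /subsetP fX; apply/negbTE/subsetPn.
by exists a => //; rewrite (disjointFr dXY (fX a af)).
Qed.

Lemma matching_in_setU X Y D1 D2 : [disjoint X & Y] ->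
  matching_in e X D1 -> matching_in e Y D2 -> matching_in e (X :|: Y) (D1 :|: D2).
Proof.
move=> dXY /matchingP [D1X D1disj] /matchingP [D2Y D2disj].
have cross f g : f \in D1 -> g \in D2 -> [disjoint f & g].
  by move=> /D1X [_ fX] /D2Y [_ gY]; apply: disjointWl fX (disjointWr gY dXY).
apply/matchingP; split => [f|f g]; rewrite !inE.
  case/orP => [/D1X|/D2Y] [-> sub]; split=> //; apply: (subset_trans sub).
    exact: subsetUl.
  exact: subsetUr.
case/orP => [fD|fD] /orP [gD|gD]; [exact: D1disj | | | exact: D2disj] => _.
  exact: cross.
by rewrite disjoint_sym cross.
Qed.

Lemma restrict_setU X Y D1 D2 : [disjoint X & Y] ->
  matching_in e X D1 -> matching_in e Y D2 -> [set f in D1 :|: D2 | f \subset X] = D1.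
Proof.
move=> dXY M1 M2; apply/setP => f; rewrite !inE andb_orl.
case fD1: (f \in D1); first by rewrite (matching_edge_sub M1 fD1).
case fD2: (f \in D2) => //=; case/matchingP: M2 => /(_ f fD2) [ef fY] _.
by rewrite disjoint_sym in dXY; rewrite (edge_sub_disjoint dXY ef fY).
Qed.

Lemma crossing_edgeP X Y f : symmetric e -> is_edge e f -> f \subset X :|: Y ->
  ~~ (f \subset X) -> ~~ (f \subset Y) ->
  exists u v, [/\ u \in X, v \in Y, e u v & f = [set u; v]].
Proof.
move=> e_sym /is_edgeP [a [b [eab ->]]]; rewrite !subUset !sub1set !inE.
case/andP => /orP [aX|aY] /orP [bX|bY]; rewrite ?aX ?bX ?aY ?bY ?orbT //= => nX nY.
  by exists a, b.
by exists b, a; rewrite e_sym setUC.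
Qed.

Lemma matching_in_setU1 S f D : is_edge e f -> f \notin D ->
  matching_in e S (f |: D) = (f \subset S) && matching_in e (S :\: f) D.
Proof.
move=> ef fD; apply/matchingP/andP => [[DS Ddisj]|[fS /matchingP [DS Ddisj]]].
  split; first by case: (DS f (setU11 _ _)).
  apply/matchingP; split => [g gD|g h gD hD]; last by apply: Ddisj; apply: setU1r.
  have [eg gS] := DS g (setU1r _ gD); split; rewrite // subsetD gS /=.
  by apply: Ddisj; rewrite ?setU11 ?setU1r //; apply: contraNneq fD => <-.
have disj_f g : g \in D -> [disjoint f & g].
  by move/DS => [_]; rewrite subsetD disjoint_sym => /andP [].
split => [g|g h]; rewrite !in_setU1.
  case/predU1P => [-> //|/DS [eg gS]]; split=> //.
  exact: subset_trans gS (subsetDl _ _).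
case/predU1P => [->|gD] /predU1P [->|hD]; rewrite ?eqxx //; first by move=> _; apply: disj_f.
  by rewrite disjoint_sym => _; apply: disj_f.
exact: Ddisj.
Qed.
End Matchings.

Section Weights.
Variables (R : comNzRingType) (V : finType) (e : rel V) (x : V -> R) (w : {set V} -> R).
Implicit Types (S X Y f : {set V}) (D : {set {set V}}).

Definition matching_weight S D := (\prod_(f in D) w f) * \prod_(v in S :\: covered D) x v.

Lemma matching_weight_setU X Y D1 D2 : [disjoint X & Y] ->
  matching_in e X D1 -> matching_in e Y D2 ->
  matching_weight (X :|: Y) (D1 :|: D2) = matching_weight X D1 * matching_weight Y D2.
Proof.
move=> dXY M1 M2; have /subsetP C1X := covered_sub M1; have /subsetP C2Y := covered_sub M2.
have dD : [disjoint D1 & D2].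
  apply/pred0P => f /=; apply/negbTE/nandP; case: (boolP (f \in D1)) => [fD1|]; last by left.
  right; apply/negP => /(matching_edge_sub M2); move: M1 => /matchingP [/(_ f fD1) [ef fX] _].
  by rewrite (edge_sub_disjoint dXY ef fX).
have uncovered : (X :|: Y) :\: (covered D1 :|: covered D2) =
                 (X :\: covered D1) :|: (Y :\: covered D2).
  apply/setP => v; rewrite !inE; have [vX|vNX] := boolP (v \in X).
    have vY := disjointFr dXY vX; have vC2 := contraFF (C2Y v) vY.
    by rewrite vY vC2 !orbF !andbT.
  by rewrite (contraNF (C1X v) vNX) /=.
rewrite /matching_weight; have -> : covered (D1 :|: D2) = covered D1 :|: covered D2.
  exact: bigcup_setU.
rewrite uncovered !big_setU_disjoint //; first exact: mulrACA.
by apply: disjointWl (subsetDl _ _) _; apply: disjointWr (subsetDl _ _) dXY.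
Qed.

Definition noncrossing X Y D := [forall f in D, (f \subset X) || (f \subset Y)].

Lemma sum_noncrossing_matchings X Y : [disjoint X & Y] ->
  \sum_(D | matching_in e (X :|: Y) D && noncrossing X Y D) matching_weight (X :|: Y) D
  = Zmd e x w X * Zmd e x w Y.
Proof.
move=> dXY; rewrite /Zmd big_distrlr pair_big /=.
pose split_by D := ([set f in D | f \subset X], [set f in D | f \subset Y]).
rewrite (reindex_onto (fun D12 : _ * _ => D12.1 :|: D12.2) split_by) /=; last first.
  move=> D /andP [_ /forall_inP DXY]; apply/setP => f; rewrite !inE -andb_orr.
  by case: (boolP (f \in D)) => // /DXY.
rewrite (eq_bigl (fun D12 : _ * _ => matching_in e X D12.1 && matching_in e Y D12.2)).
  by apply: eq_bigr => -[D1 D2] /andP [M1 M2]; apply: matching_weight_setU.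
move=> [D1 D2] /=; apply/idP/andP => [/andP [/andP [M _] /eqP [E1 E2]]|[M1 M2]].
  by rewrite -E1 -{2}E2; split; apply: matching_in_restrict M.
rewrite matching_in_setU //= /split_by (restrict_setU dXY M1 M2) setUC.
rewrite disjoint_sym in dXY; rewrite (restrict_setU dXY M2 M1).
rewrite eqxx andbT; apply/forall_inP => f; rewrite inE.
by case/orP => fD; rewrite ?(matching_edge_sub M1 fD) ?(matching_edge_sub M2 fD) ?orbT.
Qed.

Lemma Zmd_set0 : Zmd e x w set0 = 1.
Proof.
rewrite /Zmd (big_pred1 set0) => [|D]; first by rewrite big_set0 mul1r set0D big_set0.
apply/idP/eqP => [/matchingP [DS _]|->]; last by apply/matchingP; split=> f; rewrite inE.
apply/setP => f; rewrite inE; apply/negP => /DS [/edge_neq0 /set0Pn [a af] /subsetP /(_ a af)].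
by rewrite inE.
Qed.

Lemma Zmd_setU X Y : symmetric e -> [disjoint X & Y] ->
  (forall u v, u \in X -> v \in Y -> ~~ e u v) ->
  Zmd e x w (X :|: Y) = Zmd e x w X * Zmd e x w Y.
Proof.
move=> e_sym dXY nadj; rewrite -sum_noncrossing_matchings //; apply: eq_bigl => D.
rewrite /noncrossing; case: (boolP (matching_in e _ D)) => //= /matchingP [DS _].
apply/esym/forall_inP => f /DS [ef fS].
apply: contraT; rewrite negb_or => /andP [nX nY].
have [u [v [uX vY euv _]]] := crossing_edgeP e_sym ef fS nX nY.
by rewrite (negbTE (nadj u v uX vY)) in euv.
Qed.

Lemma sum_matchings_with_edge S f : is_edge e f -> f \subset S ->
  \sum_(D | matching_in e S D && (f \in D)) matching_weight S D = w f * Zmd e x w (S :\: f).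
Proof.
move=> ef fS; have fN : ~~ (f \subset S :\: f).
  have /set0Pn [a af] := edge_neq0 ef.
  by apply/negP => /subsetP /(_ a af); rewrite inE af.
rewrite /Zmd big_distrr /=.
rewrite (reindex_onto (fun D => f |: D) (fun D => D :\ f)) /=; last by move=> D /andP [_ /setD1K].
rewrite (eq_bigl (matching_in e (S :\: f))) => [|D]; last first.
  rewrite setU11 andbT; case: (boolP (f \in D)) => fD.
    have -> : matching_in e (S :\: f) D = false.
      by apply/negbTE; apply: contra fN => M; apply: matching_edge_sub M fD.
    apply/negbTE; rewrite negb_and; apply/orP; right; apply/eqP => E.
    by move: fD; rewrite -E setD11.
  by rewrite matching_in_setU1 // fS setU1K ?eqxx ?andbT.
apply: eq_bigr => D M; have fD : f \notin D by apply: contra fN => /(matching_edge_sub M).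
rewrite /matching_weight big_setU1 //= -mulrA; congr (_ * (_ * _)).
by rewrite /covered bigcup_setU big_set1 setDDl.
Qed.

Lemma Zmd_bridge X Y a b : symmetric e -> [disjoint X & Y] ->
  a \in X -> b \in Y -> e a b ->
  (forall u v, u \in X -> v \in Y -> e u v -> u = a /\ v = b) ->
  Zmd e x w (X :|: Y) =
  Zmd e x w X * Zmd e x w Y + w [set a; b] * (Zmd e x w (X :\ a) * Zmd e x w (Y :\ b)).
Proof.
move=> e_sym dXY aX bY eab bridge; set ab := [set a; b].
have aY : a \notin Y by rewrite (disjointFr dXY aX).
have bX : b \notin X by apply: contraL bY => /(disjointFr dXY) ->.
have ab_edge : is_edge e ab by apply/is_edgeP; exists a, b.
have abS : ab \subset X :|: Y by rewrite subUset !sub1set !inE aX bY orbT.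
rewrite [LHS]/Zmd (bigID (fun D => ab \in D)) /= addrC; congr (_ + _).
  rewrite -sum_noncrossing_matchings //; apply: eq_bigl => D.
  case: (boolP (matching_in e _ D)) => //= /matchingP [DS _].
  apply/idP/forall_inP => [abD f fD|nc]; last first.
    by apply/negP => /nc; rewrite !subUset !sub1set (negbTE bX) (negbTE aY) andbF.
  have [ef fS] := DS f fD; apply: contraT; rewrite negb_or => /andP [nX nY].
  have [u [v [uX vY euv fE]]] := crossing_edgeP e_sym ef fS nX nY.
  have [ua vb] := bridge u v uX vY euv.
  by move: fD; rewrite fE ua vb (negbTE abD).
transitivity (w ab * Zmd e x w ((X :|: Y) :\: ab)); first exact: sum_matchings_with_edge.
have -> : (X :|: Y) :\: ab = (X :\ a) :|: (Y :\ b).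
  apply/setP => v; rewrite !inE.
  have [->|va] := eqVneq v a; first by rewrite (negbTE aY) andbF.
  by have [->|//] := eqVneq v b; rewrite (negbTE bX) orbT andbF.
rewrite Zmd_setU //.
  by apply: disjointWl (subsetDl _ _) _; apply: disjointWr (subsetDl _ _) dXY.
move=> u v; rewrite !inE => /andP [ua uX] /andP [vb vY]; apply/negP => euv.
by have [/eqP] := bridge u v uX vY euv; rewrite (negbTE ua).
Qed.
End Weights.

Section Nonnegativity.
Variables (R : numDomainType) (V : finType) (e : rel V) (x : V -> R) (w : {set V} -> R).
Hypotheses (x_ge0 : forall v, 0 <= x v) (w_ge0 : forall f, is_edge e f -> 0 <= w f).

Lemma Zmd_ge0 S : 0 <= Zmd e x w S.
Proof.
apply: sumr_ge0 => D /matchingP [DS _].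
by rewrite mulr_ge0 // prodr_ge0 // => f /DS [/w_ge0].
Qed.
End Nonnegativity.

Section Transfer.
Variable R : comPzRingType.
Implicit Types (a b c : R) (u v : R * R).

Definition transfer a b c v : R * R := (a * v.1 + b * v.2, c * v.1).

Definition cross u v : R := u.1 * v.2 - u.2 * v.1.

Lemma cross_transfer a b c u v :
  cross (transfer a b c u) (transfer a b c v) = - (b * c) * cross u v.
Proof. by rewrite /cross /=; ring. Qed.

Lemma transfer_fst_cross a b c u v :
  (transfer a b c v).1 * u.1 - v.1 * (transfer a b c u).1 = b * cross u v.
Proof. by rewrite /cross /=; ring. Qed.
End Transfer.

Section TransferSign.
Variables (R : realDomainType) (n : nat) (a b c : nat -> R) (u v : nat -> R * R).
Hypotheses (b_ge0 : forall j, (j < n)%N -> 0 <= b j) (c_ge0 : forall j, (j < n)%N -> 0 <= c j).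
Hypotheses (u_step : forall j, (j < n)%N -> u j.+1 = transfer (a j) (b j) (c j) (u j))
           (v_step : forall j, (j < n)%N -> v j.+1 = transfer (a j) (b j) (c j) (v j)).
Hypothesis cross0_le0 : cross (u 0) (v 0) <= 0.

Lemma cross_transfer_sign j : (j <= n)%N -> 0 <= (-1) ^+ j.+1 * cross (u j) (v j).
Proof.
elim: j => [|j IH] jn; first by rewrite expr1 mulN1r oppr_ge0.
rewrite u_step // v_step // cross_transfer.
have -> : (-1) ^+ j.+2 * (- (b j * c j) * cross (u j) (v j)) =
          b j * c j * ((-1) ^+ j.+1 * cross (u j) (v j)) by rewrite exprS; ring.
by rewrite mulr_ge0 ?IH 1?ltnW // mulr_ge0 ?b_ge0 ?c_ge0.
Qed.

Lemma transfer_last_sign : (0 < n)%N ->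
  if odd n then (v n).1 * (u n.-1).1 <= (v n.-1).1 * (u n).1
  else (v n.-1).1 * (u n).1 <= (v n).1 * (u n.-1).1.
Proof.
move=> n_gt0; have [m nE] : exists m, n = m.+1 by exists n.-1; rewrite prednK.
have mn : (m < n)%N by rewrite nE.
rewrite nE /=; have := cross_transfer_sign (ltnW mn); rewrite -signr_odd /=.
have := transfer_fst_cross (a m) (b m) (c m) (u m) (v m); rewrite -u_step // -v_step // => diff.
case: (odd m) => /=; rewrite ?expr1 ?expr0 ?mul1r ?mulN1r ?oppr_ge0 => cross_sign.
  by rewrite -subr_ge0 diff mulr_ge0 ?b_ge0.
by rewrite -subr_le0 diff mulr_ge0_le0 ?b_ge0.
Qed.
End TransferSign.

Lemma setD_chain (T : finType) (A B C : {set T}) :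
  C \subset B -> B \subset A -> A :\: C = (A :\: B) :|: (B :\: C).
Proof.
move=> /subsetP CB /subsetP BA; apply/setP => v; rewrite !inE.
by case: (boolP (v \in B)) => [/BA -> | /(contraNN (CB v)) /negbTE ->]; rewrite ?orbF.
Qed.

Section NestedSlices.
Variables (R : realDomainType) (V : finType) (e : rel V) (x : V -> R) (w : {set V} -> R).
Hypotheses (e_sym : symmetric e) (x_ge0 : forall v, 0 <= x v)
           (w_ge0 : forall f, is_edge e f -> 0 <= w f).
Variables (U : nat -> {set V}) (c : nat -> V) (n : nat).
Hypotheses (U_decr : forall k, U k.+1 \subset U k)
           (c_in : forall k, (k <= n)%N -> c k \in U k)
           (c_notin : forall k, (k <= n)%N -> c k \notin U k.+1)
           (c_edge : forall k, (k < n)%N -> e (c k) (c k.+1))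
           (U_boundary : forall k u y, (0 < k <= n)%N -> u \in U k -> y \notin U k -> e u y ->
              u = c k /\ y = c k.-1).

Local Notation Z := (Zmd e x w).

Let slice i j := U i :\: U j.+1.
Let slice_vec i j := (Z (slice i j), Z (slice i j :\ c j)).

Lemma U_monotone i j : (i <= j)%N -> U j \subset U i.
Proof.
elim: j => [|j IH]; first by rewrite leqn0 => /eqP ->.
by rewrite leq_eqVlt ltnS => /predU1P [-> //|/IH]; apply: subset_trans.
Qed.

Lemma slice_step i j : (i <= j < n)%N ->
  slice_vec i j.+1 = transfer (Z (slice j.+1 j.+1))
    (w [set c j; c j.+1] * Z (slice j.+1 j.+1 :\ c j.+1)) (Z (slice j.+1 j.+1 :\ c j.+1))
    (slice_vec i j).
Proof.
case/andP => ij jn.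
have split_slice : slice i j.+1 = slice i j :|: slice j.+1 j.+1.
  exact: setD_chain (U_decr _) (U_monotone (leqW ij)).
have dslice : [disjoint slice i j & slice j.+1 j.+1].
  by apply/pred0P => v /=; rewrite !inE; case: (v \in U j.+1); rewrite ?andbF.
have cj1_in : c j.+1 \in slice j.+1 j.+1 by rewrite inE c_notin // c_in.
rewrite /slice_vec /transfer /=; congr pair.
  have cj_in : c j \in slice i j.
    by rewrite inE c_notin ?(ltnW jn) // (subsetP (U_monotone ij)) ?c_in ?(ltnW jn).
  rewrite split_slice (Zmd_bridge _ _ e_sym dslice cj_in cj1_in) ?c_edge //.
    by rewrite [Z (slice i j) * _]mulrC [Z (slice i j :\ c j) * _]mulrC mulrA.
  move=> u y; rewrite !inE => /andP [uN _] /andP [_ yU]; rewrite e_sym => eyu.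
  by have [-> ->] := U_boundary (jn : (0 < j.+1 <= n)%N) yU uN eyu.
rewrite split_slice setDUl (setDidPl (_ : [disjoint slice i j & [set c j.+1]])); last first.
  by rewrite disjoint_sym disjoints1 inE c_in // andbF.
rewrite Zmd_setU //; first exact: mulrC.
  by apply: disjointWr (subsetDl _ _) dslice.
move=> u y; rewrite !inE => /andP [uN _] /and3P [yc _ yU]; rewrite e_sym; apply/negP => eyu.
by have [/eqP] := U_boundary (jn : (0 < j.+1 <= n)%N) yU uN eyu; rewrite (negbTE yc).
Qed.

Lemma nested_slices_sign : (0 < n)%N ->
  if odd n then Z (U 1 :\: U n.+1) * Z (U 0 :\: U n) <= Z (U 1 :\: U n) * Z (U 0 :\: U n.+1)
  else Z (U 1 :\: U n) * Z (U 0 :\: U n.+1) <= Z (U 1 :\: U n.+1) * Z (U 0 :\: U n).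
Proof.
move=> n_gt0; pose v j := if j is 0 then (1, 0) else slice_vec 1 j.
have v1 j : (v j).1 = Z (slice 1 j) by case: j => //=; rewrite /slice setDv Zmd_set0.
have Z_ge0 S : 0 <= Z S by apply: Zmd_ge0.
have := @transfer_last_sign R n (fun j => Z (slice j.+1 j.+1))
  (fun j => w [set c j; c j.+1] * Z (slice j.+1 j.+1 :\ c j.+1))
  (fun j => Z (slice j.+1 j.+1 :\ c j.+1)) (slice_vec 0) v.
rewrite !v1 /= /slice prednK //; apply=> //.
- move=> j jn; rewrite mulr_ge0 // w_ge0 //.
  by apply/is_edgeP; exists (c j), (c j.+1); rewrite c_edge.
- by move=> j jn; apply: slice_step.
- case=> [|j] jn; last exact: slice_step.
  by rewrite /transfer /= mulr1 mulr0 addr0 mulr1.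
- by rewrite /cross /= mulr0 mulr1 sub0r oppr_le0.
Qed.
End NestedSlices.

Theorem lemma5p2 (R : realFieldType) (V : finType) (e : rel V)
    (x : V -> R) (w : {set V} -> R)
    (c0 : V) (p : seq V) :
  is_tree e ->
  (forall v, 0 < x v) ->
  (forall f, is_edge e f -> 0 < w f) ->
  path e c0 p -> uniq (c0 :: p) -> (1 <= size p)%N ->
  let c1 := head c0 p in
  let cl := last c0 p in
  let T1 := subtree e c0 c1 in
  let Tl := subtree e c0 cl in
  if odd (size p)
  then Zmd e x w T1 * Zmd e x w (~: Tl) <= Zmd e x w (T1 :\: Tl) * Zmd e x w setT
  else Zmd e x w (T1 :\: Tl) * Zmd e x w setT <= Zmd e x w T1 * Zmd e x w (~: Tl).
Proof.
move=> tree x_gt0 w_gt0 p_path p_uniq p_ne /=.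
have e_sym : symmetric e by case: tree => -[].
have := nested_slices_sign e_sym (fun v => ltW (x_gt0 v)) (fun f ef => ltW (w_gt0 f ef))
  (path_subtree_decr tree p_path p_uniq) (nth_in_path_subtree tree p_path p_uniq)
  (nth_notin_path_subtree tree p_path p_uniq) (pathP c0 p_path)
  (path_subtree_boundary tree p_path p_uniq) p_ne.
rewrite (path_subtree_out e c0 (ltnSn _)) !path_subtreeE // !setD0 subtree_root // setTD.
by rewrite -[size p]/(size (c0 :: p)).-1 nth_last.
Qed.
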